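(* Let $d = 10$. (i) If $n = (4(12m+9)+2) + 4(6k+3)\sqrt{10}$ with $m, k \in \mathbb{Z}$, $m \equiv 4 \pmod 5$ and $k \equiv 2 \pmod 5$, then there exist infinitely many $D(n)$-quadruples in $\mathbb{Z}[\sqrt{10}]$. (ii) If $n = (48m+2) + 24k\sqrt{10}$ with $m, k \in \mathbb{Z}$, $m \equiv 1 \pmod 5$ and $k \equiv 0 \pmod 5$, then there exist infinitely many $D(n)$-quadruples in $\mathbb{Z}[\sqrt{10}]$.
   Context: For $n \in \mathbb{Z}[\sqrt{d}]$, a set $\{a_1,a_2,a_3,a_4\}$ of four distinct non-zero elements of $\mathbb{Z}[\sqrt{d}]$ is called a $D(n)$-quadruple in $\mathbb{Z}[\sqrt{d}]$ if $a_ia_j + n$ is a square of an element of $\mathbb{Z}[\sqrt{d}]$ for all $1 \le i < j \le 4$. *)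

From Stdlib Require Import ZArith List.
Import ListNotations.
Open Scope Z_scope.

(* Elements of Z[sqrt d] represented as pairs (x, y) meaning x + y*sqrt d. *)
Definition zsq : Type := (Z * Z)%type.

Definition zsq_mul (d : Z) (u v : zsq) : zsq :=
  (fst u * fst v + d * snd u * snd v, fst u * snd v + snd u * fst v).
Definition zsq_add (u v : zsq) : zsq := (fst u + fst v, snd u + snd v).

Definition is_square (d : Z) (u : zsq) : Prop := exists w : zsq, zsq_mul d w w = u.

Definition Dn_quadruple (d : Z) (n : zsq) (a1 a2 a3 a4 : zsq) : Prop :=
  NoDup [a1; a2; a3; a4] /\
  Forall (fun a => a <> (0, 0)) [a1; a2; a3; a4] /\
  is_square d (zsq_add (zsq_mul d a1 a2) n) /\
  is_square d (zsq_add (zsq_mul d a1 a3) n) /\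
  is_square d (zsq_add (zsq_mul d a1 a4) n) /\
  is_square d (zsq_add (zsq_mul d a2 a3) n) /\
  is_square d (zsq_add (zsq_mul d a2 a4) n) /\
  is_square d (zsq_add (zsq_mul d a3 a4) n).

Definition same_set (s t : list zsq) : Prop := forall x, In x s <-> In x t.

Definition infinitely_many_Dn_quadruples (d : Z) (n : zsq) : Prop :=
  forall L : list (list zsq),
    exists a1 a2 a3 a4 : zsq,
      Dn_quadruple d n a1 a2 a3 a4 /\
      forall s, In s L -> ~ same_set s [a1; a2; a3; a4].

From Stdlib Require Import ZArith List Lia.
Import ListNotations.
Open Scope Z_scope.

(* Write elements of Z[sqrt d] as pairs and let w = x + y sqrt d.
   1. For nu = 8w + 5 the set {2, 2w^2-2w-2, 2w^2+2w+2, 8w^2-2} is a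
      D(nu)-quadruple, and its elements are distinct and non-zero as soon as
      y <> 0 (polynomial identities in w, valid for every d).
   2. Multiplying a D(nu)-quadruple by an element l of non-zero norm gives a
      D(l^2 nu)-quadruple.
   3. If n = c^2 nu0 with nu0 = 8P+5 + 8Q sqrt d and e = 8v+1 + 4w sqrt d has
      norm 1, then n = (c e)^2 nu with nu = nu0 conj(e)^2, which again has the
      shape 8x+5 + 8y sqrt d; moreover y <> 0 once the irrational part of e
      is large, because nu0 (having non-zero rational part) cannot be a
      rational integer times a unit with a large irrational part.
   4. In Z[sqrt 10] the powers of 721 + 228 sqrt 10 = (19 + 6 sqrt 10)^2
      provide such units e with arbitrarily large irrational part, and the
      first element 2ce of the resulting quadruples is then unbounded, so
      they cannot all occur in a finite list.
   The theorem follows by writing each n of the statement as c^2 nu0. *)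

Definition conj (u : zsq) : zsq := (fst u, - snd u).
Definition norm (d : Z) (u : zsq) : Z := fst u * fst u - d * snd u * snd u.

Ltac zsq_identity :=
  intros; repeat match goal with u : zsq |- _ => destruct u end;
  unfold zsq_mul, zsq_add, conj, norm; cbn [fst snd]; f_equal; ring.

Section Arithmetic.
Variable d : Z.
Local Notation mul := (zsq_mul d).

Lemma mul_zero_r (u : zsq) : mul u (0, 0) = (0, 0).
Proof. zsq_identity. Qed.

Lemma mul_scaled_pair (l u v : zsq) : mul (mul l u) (mul l v) = mul (mul l l) (mul u v).
Proof. zsq_identity. Qed.

Lemma mul_add_distr_l (l u v : zsq) : mul l (zsq_add u v) = zsq_add (mul l u) (mul l v).
Proof. zsq_identity. Qed.

Lemma norm_mul (u v : zsq) : norm d (mul u v) = norm d u * norm d v.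
Proof. unfold norm, zsq_mul; cbn [fst snd]; ring. Qed.

Lemma norm_conj (u : zsq) : norm d (conj u) = norm d u.
Proof. unfold norm, conj; cbn [fst snd]; ring. Qed.

Lemma mul_conj_l (u v : zsq) : mul (conj u) (mul u v) = (norm d u * fst v, norm d u * snd v).
Proof. zsq_identity. Qed.

Lemma mul_cancel_l (l u v : zsq) : norm d l <> 0 -> mul l u = mul l v -> u = v.
Proof.
  intros Hl E.
  assert (E' : mul (conj l) (mul l u) = mul (conj l) (mul l v)) by now rewrite E.
  rewrite !mul_conj_l in E'. injection E' as E1 E2.
  destruct u, v; cbn [fst snd] in *.
  apply Z.mul_reg_l in E1, E2; congruence.
Qed.

(* If u g is a rational integer r and g is a unit, then u = r conj(g), so the
   irrational part of u dominates that of g whenever u has a non-zero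
   rational part. *)
Lemma rational_product_bound (u g : zsq) (r : Z) :
  norm d g = 1 -> mul u g = (r, 0) -> fst u <> 0 -> Z.abs (snd g) <= Z.abs (snd u).
Proof.
  intros Hg E Hu.
  assert (Hdecomp : mul (mul u g) (conj g) = (norm d g * fst u, norm d g * snd u))
    by zsq_identity.
  rewrite E, Hg, !Z.mul_1_l in Hdecomp.
  destruct u as [u1 u2], g as [g1 g2]; unfold zsq_mul, conj in Hdecomp;
    cbn [fst snd] in *.
  injection Hdecomp as E1 E2.
  assert (Hr : r <> 0) by (intros ->; lia).
  assert (Hu2 : u2 = - (r * g2)) by lia.
  rewrite Hu2, Z.abs_opp, Z.abs_mul.
  pose proof (Z.abs_nonneg g2). assert (1 <= Z.abs r) by lia. nia.
Qed.

Lemma square_scale (l a b nu : zsq) :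
  is_square d (zsq_add (mul a b) nu) ->
  is_square d (zsq_add (mul (mul l a) (mul l b)) (mul (mul l l) nu)).
Proof.
  intros [w Hw]. exists (mul l w).
  rewrite !mul_scaled_pair, Hw, mul_add_distr_l. reflexivity.
Qed.

Lemma Dn_quadruple_scale (l nu a1 a2 a3 a4 : zsq) :
  norm d l <> 0 -> Dn_quadruple d nu a1 a2 a3 a4 ->
  Dn_quadruple d (mul (mul l l) nu) (mul l a1) (mul l a2) (mul l a3) (mul l a4).
Proof.
  intros Hl (Hdup & Hnz & H12 & H13 & H14 & H23 & H24 & H34).
  assert (Hinj : forall u v, mul l u = mul l v -> u = v)
    by (intros u v; apply mul_cancel_l, Hl).
  split; [|split].
  - change (NoDup (map (mul l) [a1; a2; a3; a4])).
    apply NoDup_map_NoDup_ForallPairs; [intros u v _ _; apply Hinj | exact Hdup].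
  - change (Forall (fun a => a <> (0, 0)) (map (mul l) [a1; a2; a3; a4])).
    apply Forall_map; refine (Forall_impl _ _ Hnz).
    intros a Ha E; apply Ha, Hinj; rewrite E, mul_zero_r; reflexivity.
  - repeat split; apply square_scale; assumption.
Qed.

(* Step 1: the base quadruple {2, 2w^2-2w-2, 2w^2+2w+2, 8w^2-2} for
   nu = 8w + 5, where w = x + y sqrt d. *)
Definition quad_b (x y : Z) : zsq := (2 * (x * x + d * y * y) - 2 * x - 2, 4 * x * y - 2 * y).
Definition quad_c (x y : Z) : zsq := (2 * (x * x + d * y * y) + 2 * x + 2, 4 * x * y + 2 * y).
Definition quad_d (x y : Z) : zsq := (8 * (x * x + d * y * y) - 2, 16 * x * y).

Lemma NoDup_four {A : Type} (a b c e : A) :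
  a <> b -> a <> c -> a <> e -> b <> c -> b <> e -> c <> e -> NoDup [a; b; c; e].
Proof. intros; repeat constructor; cbn; intuition. Qed.

Lemma mul_odd_neq0 (y t : Z) : y <> 0 -> y * (2 * t + 1) <> 0.
Proof. intros Hy E; apply Z.mul_eq_0 in E; lia. Qed.

(* The irrational parts of the pairwise differences are y times odd numbers,
   which gives distinctness and non-vanishing. *)
Lemma base_quadruple (x y : Z) :
  y <> 0 -> Dn_quadruple d (8 * x + 5, 8 * y) (2, 0) (quad_b x y) (quad_c x y) (quad_d x y).
Proof.
  intros Hy.
  pose proof (mul_odd_neq0 y (x - 1) Hy). pose proof (mul_odd_neq0 y x Hy).
  pose proof (mul_odd_neq0 y (3 * x) Hy). pose proof (mul_odd_neq0 y (3 * x - 1) Hy).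
  assert (Hx : x * y = 0 -> x = 0) by (intros E; apply Z.mul_eq_0 in E; lia).
  unfold quad_b, quad_c, quad_d.
  split; [|split].
  - apply NoDup_four; intro E; apply pair_equal_spec in E as [E1 E2];
      try (assert (x = 0) by (apply Hx; lia); subst x); nia.
  - repeat constructor; intro E; apply pair_equal_spec in E as [E1 E2];
      try (assert (x = 0) by (apply Hx; lia); subst x); nia.
  - repeat split.
    + exists (2 * x + 1, 2 * y); zsq_identity.
    + exists (2 * x + 3, 2 * y); zsq_identity.
    + exists (4 * x + 1, 4 * y); zsq_identity.
    + exists (2 * (x * x + d * y * y) - 1, 4 * x * y); zsq_identity.
    + exists (4 * (x * x + d * y * y) - 2 * x - 3, 8 * x * y - 2 * y); zsq_identity.
    + exists (4 * (x * x + d * y * y) + 2 * x + 1, 8 * x * y + 2 * y); zsq_identity.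
Qed.

(* Step 3: twisting by a unit e = 8v+1 + 4w sqrt d preserves the shape
   8x+5 + 8y sqrt d, since conj(e)^2 is congruent to 1 modulo 8. *)
Lemma twist_shape (P Q v w : Z) :
  exists x y, mul (8 * P + 5, 8 * Q) (mul (conj (8 * v + 1, 4 * w)) (conj (8 * v + 1, 4 * w)))
              = (8 * x + 5, 8 * y).
Proof.
  set (g1 := (8 * v + 1) * (8 * v + 1) + d * (4 * w) * (4 * w)).
  exists (P * g1 + 5 * (8 * v * v + 2 * v + 2 * d * w * w) - 8 * d * Q * (8 * v + 1) * w),
         (- (8 * P + 5) * (8 * v + 1) * w + Q * g1).
  unfold g1; zsq_identity.
Qed.

Lemma twist_identity (c e nu : zsq) :
  mul (mul (mul c e) (mul c e)) (mul nu (mul (conj e) (conj e)))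
  = mul (mul (mul c c) nu) (norm d e * norm d e, 0).
Proof. zsq_identity. Qed.

End Arithmetic.

Lemma rational_parts_bounded (l : list zsq) : exists B, forall u, In u l -> Z.abs (fst u) < B.
Proof.
  induction l as [|a l [B HB]].
  - exists 0; intros u [].
  - exists (Z.max (Z.abs (fst a) + 1) B).
    intros u [<- | Hu]; [lia | specialize (HB u Hu); lia].
Qed.

Lemma infinitely_many_of_unbounded (d : Z) (n : zsq) :
  (forall B, exists a1 a2 a3 a4, Dn_quadruple d n a1 a2 a3 a4 /\ B <= Z.abs (fst a1)) ->
  infinitely_many_Dn_quadruples d n.
Proof.
  intros Hunb L.
  destruct (rational_parts_bounded (concat L)) as [B HB].
  destruct (Hunb B) as (a1 & a2 & a3 & a4 & Hq & Ha1).
  exists a1, a2, a3, a4; split; [exact Hq|].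
  intros s Hs Hsame.
  assert (Hin : In a1 (concat L))
    by (apply in_concat; exists s; split; [exact Hs | apply Hsame; left; reflexivity]).
  specialize (HB a1 Hin); lia.
Qed.

(* Step 4: units 8v+1 + 4w sqrt 10 of norm 1 with w arbitrarily large, namely
   the powers of 721 + 228 sqrt 10. *)
Lemma large_units (B : Z) :
  exists v w, norm 10 (8 * v + 1, 4 * w) = 1 /\ 0 <= v /\ B <= w.
Proof.
  enough (H : forall s : nat, exists v w,
            norm 10 (8 * v + 1, 4 * w) = 1 /\ 0 <= v /\ 0 <= w /\ Z.of_nat s <= w).
  { destruct (H (Z.to_nat B)) as (v & w & Hn & Hv & Hw & Hs). exists v, w. lia. }
  induction s as [|s (v & w & Hn & Hv & Hw & Hs)].
  - exists 0, 0; cbn; lia.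
  - exists (721 * v + 90 + 1140 * w), (456 * v + 57 + 721 * w).
    assert (Hstep : (8 * (721 * v + 90 + 1140 * w) + 1, 4 * (456 * v + 57 + 721 * w))
                    = zsq_mul 10 (8 * v + 1, 4 * w) (721, 228)) by zsq_identity.
    rewrite Hstep, norm_mul, Hn. split; [reflexivity | lia].
Qed.

Lemma infinitely_many_of_factorization (n c : zsq) (P Q : Z) :
  n = zsq_mul 10 (zsq_mul 10 c c) (8 * P + 5, 8 * Q) ->
  norm 10 c <> 0 -> 0 <= fst c -> 1 <= snd c ->
  infinitely_many_Dn_quadruples 10 n.
Proof.
  intros -> Hc Hc1 Hc2. apply infinitely_many_of_unbounded. intros B.
  destruct (large_units (Z.max B (Z.abs (8 * Q) + 1))) as (v & w & He & Hv & Hw).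
  set (e := (8 * v + 1, 4 * w)) in *.
  set (g := zsq_mul 10 (conj e) (conj e)).
  set (lam := zsq_mul 10 c e).
  destruct (twist_shape 10 P Q v w) as (x & y & Hnu); fold e g in Hnu.
  assert (Hn : zsq_mul 10 (zsq_mul 10 lam lam) (8 * x + 5, 8 * y)
               = zsq_mul 10 (zsq_mul 10 c c) (8 * P + 5, 8 * Q)).
  { rewrite <- Hnu. unfold lam, g. rewrite twist_identity, He. zsq_identity. }
  assert (Hy : y <> 0).
  { intros ->.
    assert (Hg : norm 10 g = 1) by (unfold g; rewrite norm_mul, norm_conj, He; reflexivity).
    pose proof (rational_product_bound 10 _ _ _ Hg Hnu ltac:(cbn [fst]; lia)) as Hbound.
    assert (Hsnd : snd g = - (8 * ((8 * v + 1) * w)))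
      by (unfold g, e, conj, zsq_mul; cbn [fst snd]; ring).
    rewrite Hsnd, Z.abs_opp, Z.abs_eq in Hbound by nia. cbn [snd] in Hbound. nia. }
  assert (Hlam : norm 10 lam <> 0) by (unfold lam; rewrite norm_mul, He; lia).
  pose proof (Dn_quadruple_scale 10 lam _ _ _ _ _ Hlam (base_quadruple 10 x y Hy)) as Hq.
  rewrite Hn in Hq.
  do 4 eexists; split; [exact Hq|].
  assert (Hfst : fst (zsq_mul 10 lam (2, 0)) = 2 * (fst c * (8 * v + 1) + 10 * snd c * (4 * w)))
    by (unfold lam, e, zsq_mul; cbn [fst snd]; ring).
  rewrite Hfst, Z.abs_eq; nia.
Qed.

(* Each n of the statement is c^2 (8P+5 + 8Q sqrt 10); the factor c depends
   on the case and on the parity of floor(k/5). *)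
Theorem mainTheorem5 :
  (forall m k : Z, m mod 5 = 4 -> k mod 5 = 2 ->
     infinitely_many_Dn_quadruples 10 (4 * (12 * m + 9) + 2, 4 * (6 * k + 3))) /\
  (forall m k : Z, m mod 5 = 1 -> k mod 5 = 0 ->
     infinitely_many_Dn_quadruples 10 (48 * m + 2, 24 * k)).
Proof.
  split; intros m k Hm Hk;
    pose proof (Z.div_mod m 5 ltac:(lia)) as Em;
    pose proof (Z.div_mod k 5 ltac:(lia)) as Ek;
    rewrite Hm in Em; rewrite Hk in Ek;
    set (j := m / 5) in *; set (q := k / 5) in *; clearbody j q; subst m k;
    destruct (Z.Even_or_Odd q) as [[l ->] | [l ->]].
  - apply (infinitely_many_of_factorization _ (10, 3) (57 * j - 180 * l + 9)
             (-18 * j + 57 * l - 3)); [zsq_identity | cbn; lia ..].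
  - apply (infinitely_many_of_factorization _ (370, 117) (82137 * j - 259740 * l - 116091)
             (-25974 * j + 82137 * l + 36711)); [zsq_identity | cbn; lia ..].
  - apply (infinitely_many_of_factorization _ (0, 1) (3 * j) (3 * l));
      [zsq_identity | cbn; lia ..].
  - apply (infinitely_many_of_factorization _ (60, 19) (2163 * j - 6840 * l - 2970)
             (-684 * j + 2163 * l + 939)); [zsq_identity | cbn; lia ..].
Qed.
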